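(* Let $m\ge2$ be an integer. There is a bijection $[\mathcal{A}_m]_m\to\mathcal{A}_m^m$, $\pi\mapsto(\lambda^{(1)},\ldots,\lambda^{(m)})$, such that $|\pi|=m\cdot(|\lambda^{(1)}|+\cdots+|\lambda^{(m)}|)$ and $\ell(\pi)=\ell(\lambda^{(1)})+\cdots+\ell(\lambda^{(m)})$. As a consequence, the numbers $a_m(n)$ defined by $\sum_{n\ge0}a_m(n)q^n=\prod_{k\ge0}(1+q^{m^k})^{m^k}$ form an $m$-convolutive sequence.
   Context: A colored $m$-ary strict partition is a finite set of parts, each part being a pair written $m^k_{c}$ with $k\ge0$ an integer and color $c\in\{1,\ldots,m^k\}$ (so no two parts share both the same size and the same color); the part $m^k_c$ has size $m^k$. The weight $|\pi|$ is the sum of the sizes of its parts and $\ell(\pi)$ is its number of parts. $\mathcal{A}_m$ denotes the set of colored $m$-ary strict partitions (including the empty one), and $[\mathcal{A}_m]_m$ the subset of those whose weight is divisible by $m$. A sequence $(a_n)_{n\ge0}$ is $m$-convolutive if $\sum_{n\ge0}a_{mn}q^n=\big(\sum_{n\ge0}a_nq^n\big)^m$. *)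

From HB Require Import structures.
From mathcomp Require Import all_boot all_order all_algebra.
From mathcomp Require Import finmap.
Set Implicit Arguments. Unset Strict Implicit. Unset Printing Implicit Defensive.
Import GRing.Theory.

Local Open Scope fset_scope.

(* A part m^k_c is encoded as the pair (k, c); a colored m-ary strict
   partition is a finite set of such pairs with 1 <= c <= m^k. *)
Definition valid_cpart (m : nat) (s : {fset (nat * nat)}) : bool :=
  all (fun x : nat * nat => (0 < x.2 <= m ^ x.1)%N) s.

Definition cpart (m : nat) := {s : {fset (nat * nat)} | valid_cpart m s}.

Definition cweight (m : nat) (p : cpart m) : nat :=
  (\sum_(x <- val p) m ^ x.1)%N.

Definition clength (m : nat) (p : cpart m) : nat := #|` val p|.

Definition cpart_divm (m : nat) := {p : cpart m | (m %| cweight p)%N}.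

Local Close Scope fset_scope.
Local Open Scope ring_scope.

(* a_m(n) = coefficient of q^n in prod_{k>=0} (1+q^{m^k})^{m^k}; for m >= 2
   only the factors with k <= n contribute to the coefficient of q^n
   (since m^k > k), so the product is truncated to k < n+1. *)
Definition am (m n : nat) : int :=
  (\prod_(k < n.+1) (1 + 'X^(m ^ k)) ^+ (m ^ k) : {poly int})`_n.

(* (a_n) is m-convolutive: sum_n a_{mn} q^n = (sum_n a_n q^n)^m, as formal
   power series, i.e. coefficientwise; the coefficient of q^n of the m-th
   power only depends on a_0..a_n. *)
Definition m_convolutive (m : nat) (a : nat -> int) : Prop :=
  forall n : nat,
    a (m * n)%N = ((\sum_(i < n.+1) a i *: 'X^i : {poly int}) ^+ m)`_n.

(* A part m^k_c of the i-th component of the tuple becomes the part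
   m^(k+1)_(i m^k + c).  Conversely, every part of a partition of weight
   divisible by m has size at least m (the only possible part of size 1 is
   1_1, and it would make the weight 1 mod m), and its color determines the
   index i and the original color by Euclidean division by m^k.  The
   convolutivity of a_m follows from the functional equation
   P(q) = (1 + q) P(q^m)^m of P(q) = prod_k (1 + q^(m^k))^(m^k), since the
   coefficient of q^(mn) in q P(q^m)^m vanishes. *)

From HB Require Import structures.
From mathcomp Require Import all_boot all_order all_algebra.
From mathcomp Require Import finmap.
From mathcomp Require Import zify.
Set Implicit Arguments. Unset Strict Implicit. Unset Printing Implicit Defensive.
Import GRing.Theory.

Section ShiftPart.

Variable m : nat.

Definition valid_part (x : nat * nat) : bool := (0 < x.2 <= m ^ x.1)%N.

Lemma cpart_valid (p : cpart m) x : x \in val p -> valid_part x.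
Proof. by case: p => s /= /allP; apply. Qed.

Definition shift_part (i : nat) (x : nat * nat) : nat * nat :=
  (x.1.+1, i * m ^ x.1 + x.2)%N.

Definition part_index (x : nat * nat) : nat := (x.2.-1 %/ m ^ x.1.-1)%N.

Definition unshift_part (x : nat * nat) : nat * nat :=
  (x.1.-1, (x.2.-1 %% m ^ x.1.-1).+1)%N.

Lemma part_index_shift i x : valid_part x -> part_index (shift_part i x) = i.
Proof.
case: x => k c /andP[/= c_gt0 c_le]; have mk_gt0 : (0 < m ^ k)%N by lia.
rewrite /part_index /=.
have -> : ((i * m ^ k + c).-1 = i * m ^ k + c.-1)%N by lia.
rewrite divnMDl // divn_small ?addn0 //; lia.
Qed.

Lemma shift_partK i x : valid_part x -> unshift_part (shift_part i x) = x.
Proof.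
case: x => k c /andP[/= c_gt0 c_le]; have mk_gt0 : (0 < m ^ k)%N by lia.
rewrite /unshift_part /=.
have -> : ((i * m ^ k + c).-1 = i * m ^ k + c.-1)%N by lia.
rewrite modnMDl modn_small; [congr pair|]; lia.
Qed.

Lemma unshift_partK x : valid_part x -> (0 < x.1)%N ->
  shift_part (part_index x) (unshift_part x) = x.
Proof.
case: x => [[|k] c] /andP[/= c_gt0 _] //= _.
by rewrite /shift_part /= addnS -divn_eq prednK.
Qed.

Lemma part_index_lt x : valid_part x -> (0 < x.1)%N -> (part_index x < m)%N.
Proof.
case: x => [[|k] c] //= /andP[/= c_gt0]; rewrite expnS => c_le _.
have mk_gt0 : (0 < m ^ k)%N by rewrite expn_gt0; case: m c_le => //=; lia.
rewrite /part_index /= ltn_divLR //; lia.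
Qed.

Lemma valid_unshift x : (0 < m)%N -> valid_part (unshift_part x).
Proof.
by move=> m_gt0; rewrite /valid_part /= ltn_mod expn_gt0 m_gt0.
Qed.

Lemma valid_shift i x : (i < m)%N -> valid_part x -> valid_part (shift_part i x).
Proof.
case: x => k c i_lt /andP[/= c_gt0 c_le]; rewrite /valid_part /= expnS.
have : (i.+1 * m ^ k <= m * m ^ k)%N by rewrite leq_mul2r i_lt orbT.
rewrite mulSn; lia.
Qed.

Lemma expn_part_mod x : valid_part x -> m ^ x.1 = (x == (0, 1)%N) %[mod m].
Proof.
case: x => [[|k] c] /andP[/= c_gt0 c_le]; last by rewrite expnS modnMr mod0n.
by have -> : c = 1%N by lia.
Qed.

Lemma cweight_mod (p : cpart m) : cweight p = ((0, 1)%N \in val p) %[mod m].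
Proof.
rewrite /cweight -modn_summ.
rewrite (eq_big_seq (fun x => (x == (0, 1)%N) %% m)) => [|x /cpart_valid/expn_part_mod ->//].
rewrite modn_summ.
have -> : \sum_(x <- val p) (x == (0, 1)%N : nat) = count_mem (0, 1)%N (val p).
  by rewrite -sum1_count [RHS]big_mkcond.
by rewrite (count_uniq_mem _ (fset_uniq (val p))).
Qed.

End ShiftPart.

Lemma cpart_divm_part_gt0 m (pi : cpart_divm m) x :
  (1 < m)%N -> x \in val (val pi) -> (0 < x.1)%N.
Proof.
case: pi => p /= m_dvd m_gt1 x_in; rewrite lt0n; apply/negP => /eqP x1_0.
have x_eq : x = (0, 1)%N.
  move: (cpart_valid x_in); case: x x1_0 {x_in} => k c /= -> /andP[/= c_gt0].
  by rewrite expn0 => c_le1; congr pair; lia.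
by move: m_dvd; rewrite /dvdn cweight_mod -x_eq x_in modn_small.
Qed.

Section MergeSplit.

Variable m : nat.

Local Open Scope fset_scope.

Definition merge_parts (l : m.-tuple (cpart m)) : {fset nat * nat} :=
  [fset shift_part m (nat_of_ord i) y | i : 'I_m, y in val (tnth l i)].

Lemma mem_merge_parts (l : m.-tuple (cpart m)) x :
  reflect (exists i : 'I_m, exists2 y, y \in val (tnth l i) & x = shift_part m i y)
          (x \in merge_parts l).
Proof.
apply: (iffP (imfset2P _ _ _ _ _)) => [[i _ [y y_in ->]]|[i [y y_in ->]]].
  by exists i, y.
by exists i => //; exists y.
Qed.

Lemma big_merge_parts (l : m.-tuple (cpart m)) (F : nat * nat -> nat) :
  (\sum_(x <- merge_parts l) F x
   = \sum_(i < m) \sum_(y <- val (tnth l i)) F (shift_part m i y))%N.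
Proof.
rewrite big_imfset2 ?big_enum // => -[i y] [j z]; rewrite !inE /= => y_in z_in eq_yz.
have [y_valid z_valid] := (cpart_valid y_in, cpart_valid z_in).
have eq_ij : i = j.
  by apply: val_inj; rewrite /= -(part_index_shift i y_valid) eq_yz part_index_shift.
by subst j; rewrite -(shift_partK i y_valid) eq_yz shift_partK.
Qed.

Lemma valid_merge_parts (l : m.-tuple (cpart m)) : valid_cpart m (merge_parts l).
Proof.
apply/allP => x /mem_merge_parts [i [y y_in ->]].
exact: valid_shift (ltn_ord i) (cpart_valid y_in).
Qed.

Definition merge (l : m.-tuple (cpart m)) : cpart m :=
  exist _ (merge_parts l) (valid_merge_parts l).

Lemma cweight_merge (l : m.-tuple (cpart m)) :
  cweight (merge l) = (m * \sum_(i < m) cweight (tnth l i))%N.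
Proof.
rewrite /cweight big_merge_parts big_distrr; apply: eq_bigr => i _.
by rewrite big_distrr; apply: eq_bigr => y _; rewrite expnS.
Qed.

Lemma clength_merge (l : m.-tuple (cpart m)) :
  clength (merge l) = (\sum_(i < m) clength (tnth l i))%N.
Proof.
rewrite /clength -sum1_size big_merge_parts; apply: eq_bigr => i _.
by rewrite -sum1_size.
Qed.

Lemma dvdn_cweight_merge (l : m.-tuple (cpart m)) : (m %| cweight (merge l))%N.
Proof. by rewrite cweight_merge dvdn_mulr. Qed.

Definition merge_divm (l : m.-tuple (cpart m)) : cpart_divm m :=
  exist _ (merge l) (dvdn_cweight_merge l).

Hypothesis m_gt1 : (1 < m)%N.

Definition component_parts (s : {fset nat * nat}) (i : nat) : {fset nat * nat} :=
  [fset unshift_part m x | x in s & part_index m x == i].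

Lemma mem_component_parts s i y :
  reflect (exists2 x, (x \in s) && (part_index m x == i) & y = unshift_part m x)
          (y \in component_parts s i).
Proof. by apply: (iffP (imfsetP _ _ _ _)) => -[x x_in ->]; exists x. Qed.

Lemma valid_component_parts s i : valid_cpart m (component_parts s i).
Proof. by apply/allP => y /mem_component_parts [x _ ->]; apply: valid_unshift; lia. Qed.

Definition split_divm (pi : cpart_divm m) : m.-tuple (cpart m) :=
  [tuple exist _ (component_parts (val (val pi)) i)
                 (valid_component_parts (val (val pi)) i) | i < m].

Lemma split_divmK : cancel split_divm merge_divm.
Proof.
move=> pi; do 2 apply: val_inj; apply/fsetP => x /=.
apply/mem_merge_parts/idP => [[i [y]]|x_in].
  rewrite tnth_mktuple => /mem_component_parts [z /andP[z_in /eqP <-] ->] ->.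
  by rewrite unshift_partK ?(cpart_valid z_in) ?(cpart_divm_part_gt0 m_gt1 z_in).
have [x_valid x1_gt0] := (cpart_valid x_in, cpart_divm_part_gt0 m_gt1 x_in).
exists (Ordinal (part_index_lt x_valid x1_gt0)), (unshift_part m x).
  by rewrite tnth_mktuple; apply/mem_component_parts; exists x; rewrite ?x_in ?eqxx.
by rewrite unshift_partK.
Qed.

Lemma merge_divmK : cancel merge_divm split_divm.
Proof.
move=> l; apply: eq_from_tnth => i; rewrite tnth_mktuple; apply: val_inj => /=.
apply/fsetP => y; apply/mem_component_parts/idP => [[x]|y_in].
  case/andP=> /mem_merge_parts [j [z z_in ->]]; rewrite part_index_shift ?(cpart_valid z_in) //.
  by move=> /eqP/val_inj <- ->; rewrite shift_partK ?(cpart_valid z_in).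
exists (shift_part m i y); last by rewrite shift_partK ?(cpart_valid y_in).
rewrite part_index_shift ?(cpart_valid y_in) // eqxx andbT.
by apply/mem_merge_parts; exists i, y.
Qed.

End MergeSplit.

Section CoefUpto.

Local Open Scope ring_scope.

Variables (R : nzRingType) (n : nat).

Definition eq_coef_upto (p q : {poly R}) : Prop := forall j, (j <= n)%N -> p`_j = q`_j.

Lemma eq_coef_uptoM p p' q q' :
  eq_coef_upto p p' -> eq_coef_upto q q' -> eq_coef_upto (p * q) (p' * q').
Proof.
move=> eq_p eq_q j j_le; rewrite !coefM; apply: eq_bigr => i _.
have i_le : (i <= j)%N by rewrite -ltnS.
by rewrite eq_p ?eq_q //; apply: leq_trans j_le; rewrite ?leq_subr.
Qed.

Lemma eq_coef_uptoX p q k : eq_coef_upto p q -> eq_coef_upto (p ^+ k) (q ^+ k).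
Proof.
move=> eq_pq; elim: k => [|k IHk]; first by move=> j _; rewrite !expr0.
by rewrite !exprS; apply: eq_coef_uptoM.
Qed.

End CoefUpto.

Section AmGeneratingFunction.

Local Open Scope ring_scope.

Variable m : nat.

Definition am_gf (N : nat) : {poly int} := \prod_(k < N) (1 + 'X^(m ^ k)) ^+ (m ^ k).

Lemma am_gfS N : am_gf N.+1 = (1 + 'X) * (am_gf N \Po 'X^m) ^+ m.
Proof.
rewrite /am_gf big_ord_recl expn0 !expr1; congr (_ * _).
rewrite rmorph_prod -prodrXl; apply: eq_bigr => k _.
by rewrite rmorphXn rmorphD rmorph1 /= comp_Xn_poly -!exprM /bump /= add1n expnS mulnC.
Qed.

Hypothesis m_gt1 : (1 < m)%N.

Lemma coef_am_gf n N : (n < N)%N -> (am_gf N)`_n = am m n.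
Proof.
elim: N => // N IHN; rewrite ltnS leq_eqVlt => /orP[/eqP-> // | n_lt].
rewrite -IHN // /am_gf big_ord_recr /=.
have eq_factor1 : eq_coef_upto n ((1 + 'X^(m ^ N)) ^+ (m ^ N)) (1 : {poly int}).
  rewrite -[X in eq_coef_upto _ _ X](expr1n _ (m ^ N)); apply: eq_coef_uptoX => j j_le.
  have n_lt_mN : (n < m ^ N)%N by apply: leq_trans n_lt (ltnW (ltn_expl N m_gt1)).
  by rewrite coefD coefXn ltn_eqF ?addr0 //; exact: leq_ltn_trans j_le n_lt_mN.
by rewrite (eq_coef_uptoM (n := n) (fun j _ => erefl) eq_factor1) ?mulr1.
Qed.

Lemma am_convolutive : m_convolutive m (am m).
Proof.
move=> n; have m_gt0 : (0 < m)%N by apply: ltnW.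
have coef_X_comp (p : {poly int}) : ('X * (p \Po 'X^m))`_(m * n) = 0.
  rewrite coefXM; case: eqP => // mn_neq0; rewrite coef_comp_poly_Xn //.
  suff -> : (m %| (m * n).-1)%N = false by [].
  apply/negbTE/negP => m_dvd.
  have : (m %| m * n - (m * n).-1)%N by apply: dvdn_sub; rewrite ?dvdn_mulr.
  have -> : (m * n - (m * n).-1 = 1)%N by lia.
  by rewrite dvdn1 gtn_eqF.
rewrite -(coef_am_gf (leqnSn (m * n).+1)) am_gfS -rmorphXn mulrDl mul1r.
rewrite coefD coef_X_comp addr0 coef_comp_poly_Xn // dvdn_mulr // mulKn //.
apply: eq_coef_uptoX (leqnn n) => j j_le.
rewrite -poly_def coef_poly ltnS j_le coef_am_gf // ltnS.
exact: leq_trans j_le (leq_pmull n m_gt0).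
Qed.

End AmGeneratingFunction.

Theorem theorem5p2 (m : nat) (hm : (2 <= m)%N) :
  (exists f : cpart_divm m -> m.-tuple (cpart m),
      bijective f /\
      forall pi : cpart_divm m,
        cweight (val pi) = (m * \sum_(i < m) cweight (tnth (f pi) i))%N /\
        clength (val pi) = (\sum_(i < m) clength (tnth (f pi) i))%N)
  /\ m_convolutive m (am m).
Proof.
split; last exact: am_convolutive.
exists (split_divm hm); split.
  by exists (@merge_divm m); [exact: split_divmK | exact: merge_divmK].
move=> pi; have <- : val (merge_divm (split_divm hm pi)) = val pi by rewrite split_divmK.
exact: conj (cweight_merge _) (clength_merge _).
Qed.
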